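(* Let $1\le r\le s\le t$ and let $u=ABCd$, $v=A'B'C'd'$ be vertices of $E3C(r,s,t)$ with $A=A'$, $B\ne B'$, $C=C'$ and $d\ne d'$. Then there exist $2r+2$ pairwise internally disjoint $u$–$v$ paths in $E3C(r,s,t)$, each of length at most $s+6$ if $\{d,d'\}=\{0,1\}$ or $\{d,d'\}=\{1,2\}$, and each of length at most $s+8$ if $\{d,d'\}=\{0,2\}$.
   Context: The exchanged 3-ary $n$-cube $E3C(r,s,t)$ ($r,s,t\ge1$, $n=r+s+t+1$): vertices are strings written $x=ABCd$ with $A\in\{0,1,2\}^r$, $B\in\{0,1,2\}^s$, $C\in\{0,1,2\}^t$, $d\in\{0,1,2\}$. Two distinct vertices $x=ABCd$, $y=A'B'C'd'$ are adjacent iff one of: (E0) $A=A',B=B',C=C'$ and $d\ne d'$; (E1) $d=d'=0$, $A=A'$, $B=B'$ and $C,C'$ differ in exactly one position; (E2) $d=d'=1$, $A=A'$, $C=C'$ and $B,B'$ differ in exactly one position; (E3) $d=d'=2$, $B=B'$, $C=C'$ and $A,A'$ differ in exactly one position. Paths are internally disjoint if they share no vertices other than their endpoints; length = number of edges. *)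

From mathcomp Require Import all_boot.
Set Implicit Arguments. Unset Strict Implicit. Unset Printing Implicit Defensive.

Definition word (n : nat) := {ffun 'I_n -> 'I_3}.

Definition hdist n (x y : word n) : nat := #|[set i | x i != y i]|.

Definition e3c_vertex (r s t : nat) : finType :=
  (word r * word s * word t * 'I_3)%type.

Definition vA r s t (x : e3c_vertex r s t) : word r := x.1.1.1.
Definition vB r s t (x : e3c_vertex r s t) : word s := x.1.1.2.
Definition vC r s t (x : e3c_vertex r s t) : word t := x.1.2.
Definition vd r s t (x : e3c_vertex r s t) : 'I_3 := x.2.

Definition e3c_adj r s t (x y : e3c_vertex r s t) : bool :=
  (x != y) &&
  [|| [&& vA x == vA y, vB x == vB y, vC x == vC y & vd x != vd y],
      [&& vd x == 0 :> nat, vd y == 0 :> nat, vA x == vA y, vB x == vB y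
        & hdist (vC x) (vC y) == 1],
      [&& vd x == 1 :> nat, vd y == 1 :> nat, vA x == vA y, vC x == vC y
        & hdist (vB x) (vB y) == 1]
    | [&& vd x == 2 :> nat, vd y == 2 :> nat, vB x == vB y, vC x == vC y
        & hdist (vA x) (vA y) == 1]].

(* A u-v path is represented by its list q of internal vertices; the full
   vertex sequence is u :: rcons q v. *)
Definition is_uv_path r s t (u v : e3c_vertex r s t) (q : seq (e3c_vertex r s t)) : bool :=
  path (@e3c_adj r s t) u (rcons q v) && uniq (u :: rcons q v).

Definition path_length T (q : seq T) : nat := (size q).+1.

From mathcomp Require Import all_boot zify.
Set Implicit Arguments. Unset Strict Implicit. Unset Printing Implicit Defensive.

(* Each path crosses from B to B' along
   a Hamming geodesic (at most s edges) inside layer 1, carrying fixed A and C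
   coordinates: those of u, a neighbour of A, or, for the 2r remaining paths,
   one of the 2r neighbours of C (layers {0,1}) or of A (layers {0,2}).
   Moving to and from these coordinates through layers 0 and 2 costs at most
   6, resp. 8, further edges.  These coordinates, together with the layer
   and B, determine the path through any of its vertices, so the paths are
   internally disjoint.  The layers {1,2} reduce to {0,1} by the automorphism
   exchanging the A and C coordinates and the layers 0 and 2, and reversed
   pairs of layers by reversing the paths. *)

Definition shift3 (x : 'I_3) (b : bool) : 'I_3 :=
  Ordinal (ltn_pmod (x + 1 + b) (isT : 0 < 3)).

Lemma shift3_neq x b : shift3 x b != x.
Proof. by case: x => [[|[|[|m]]] Hm] //; case: b. Qed.

Lemma shift3_inj x : injective (shift3 x).
Proof. by case: x => [[|[|[|m]]] Hm] //; do 2 case. Qed.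

Section Words.
Variable n : nat.
Implicit Types X Y Z W : word n.

Lemma hdistC X Y : hdist X Y = hdist Y X.
Proof. by apply: eq_card => i; rewrite !inE eq_sym. Qed.

Lemma hdist_eq0 X Y : (hdist X Y == 0) = (X == Y).
Proof.
rewrite /hdist cards_eq0; apply/eqP/eqP => [XY|->]; last by apply/setP => i; rewrite !inE eqxx.
by apply/ffunP => i; apply/eqP; move/setP: XY => /(_ i); rewrite !inE => /negbFE.
Qed.

Lemma hdistxx X : hdist X X = 0.
Proof. by apply/eqP; rewrite hdist_eq0. Qed.

Lemma hdist1_neq X Y : hdist X Y = 1 -> X != Y.
Proof. by move=> XY; rewrite -hdist_eq0 XY. Qed.

Lemma hdist_leq X Y : hdist X Y <= n.
Proof. by rewrite /hdist; apply: leq_trans (max_card _) _; rewrite card_ord. Qed.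

Lemma hdist_split X Y Z : (forall i, Y i = X i \/ Y i = Z i) ->
  hdist X Z = hdist X Y + hdist Y Z.
Proof.
move=> between; rewrite /hdist -cardsUI.
rewrite (_ : _ :&: _ = set0) ?cards0 ?addn0; last first.
  by apply/setP => i; rewrite !inE; case: (between i) => ->; rewrite eqxx ?andbF.
by apply: eq_card => i; rewrite !inE; case: (between i) => ->; rewrite eqxx ?orbF.
Qed.

Definition upd X (i : 'I_n) (y : 'I_3) : word n :=
  [ffun j => if j == i then y else X j].

Lemma hdist_upd X i y : X i != y -> hdist X (upd X i y) = 1.
Proof.
move=> Xi; rewrite /hdist (_ : [set _ | _] = [set i]) ?cards1 //.
by apply/setP => j; rewrite !inE ffunE; case: (j =P i) => [->|]; rewrite ?eqxx.
Qed.

Lemma hdist_updS X Y i : X i != Y i -> hdist X Y = (hdist (upd X i (Y i)) Y).+1.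
Proof.
move=> XYi; rewrite /hdist (cardsD1 i) inE XYi add1n; congr _.+1.
by apply: eq_card => j; rewrite !inE ffunE; case: (j =P i) => [->|]; rewrite ?eqxx.
Qed.

Fixpoint geodesic_rec k X Y : seq (word n) :=
  if k is k'.+1 then
    if [pick i | X i != Y i] is Some i then
      upd X i (Y i) :: geodesic_rec k' (upd X i (Y i)) Y
    else [::]
  else [::].

Definition geodesic X Y := geodesic_rec (hdist X Y) X Y.

Lemma geodesic_recS k X Y : hdist X Y = k.+1 -> exists2 i, X i != Y i &
  hdist (upd X i (Y i)) Y = k /\
  geodesic_rec k.+1 X Y = upd X i (Y i) :: geodesic_rec k (upd X i (Y i)) Y.
Proof.
move=> XY /=; case: pickP => [i XYi|same].
  by exists i; move: XY; rewrite (hdist_updS XYi) => -[].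
suff : X == Y by rewrite -hdist_eq0 XY.
by apply/eqP/ffunP => i; apply/eqP; move/negbT: (same i); rewrite negbK.
Qed.

Definition hdist1 : rel (word n) := fun X Y => hdist X Y == 1.

Lemma geodesic_recP k X Y : hdist X Y = k ->
  [/\ path hdist1 X (geodesic_rec k X Y), last X (geodesic_rec k X Y) = Y,
      size (geodesic_rec k X Y) = k,
      {in geodesic_rec k X Y, forall W, hdist W Y < k} &
      {in geodesic_rec k X Y, forall W i, W i = X i \/ W i = Y i}].
Proof.
elim: k X => [|k IHk] X XY; first by split=> //=; apply/eqP; rewrite -hdist_eq0 XY.
have [i XYi [XiY ->]] := geodesic_recS XY.
have [Ipath Ilast Isize Idist Ibetween] := IHk _ XiY.
split=> /= [|//|//|W|W].
- by rewrite Ipath andbT /hdist1 hdist_upd.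
- by rewrite Isize.
- by rewrite inE => /predU1P[->|/Idist/leqW]; rewrite ?XiY.
rewrite inE => /predU1P[-> j|/Ibetween WB j].
  by rewrite ffunE; case: (j =P i) => [->|]; [right|left].
by case: (WB j) => ->; [rewrite ffunE; case: (j =P i) => [->|]|]; [right|left|right].
Qed.

Lemma geodesic_path X Y : path hdist1 X (geodesic X Y).
Proof. by have [] := geodesic_recP (erefl (hdist X Y)). Qed.

Lemma geodesic_last X Y : last X (geodesic X Y) = Y.
Proof. by have [] := geodesic_recP (erefl (hdist X Y)). Qed.

Lemma size_geodesic X Y : size (geodesic X Y) = hdist X Y.
Proof. by have [] := geodesic_recP (erefl (hdist X Y)). Qed.

Lemma geodesic_rec_uniq k X Y : hdist X Y = k -> uniq (X :: geodesic_rec k X Y).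
Proof.
elim: k X => [|k IHk] X XY //.
have [i XYi [XiY ->]] := geodesic_recS XY.
have [_ _ _ Idist _] := geodesic_recP XiY.
rewrite cons_uniq (IHk _ XiY) andbT inE negb_or; apply/andP; split.
  by apply/eqP => X_eq; move: (hdist_upd XYi); rewrite -X_eq hdistxx.
by apply/negP => /Idist; rewrite XY ltnNge leqnSn.
Qed.

Lemma geodesic_uniq X Y : uniq (X :: geodesic X Y).
Proof. exact: geodesic_rec_uniq. Qed.

Lemma uniq_geodesic X Y : uniq (geodesic X Y).
Proof. by have /andP[] := geodesic_uniq X Y. Qed.

Lemma geodesic_notin X Y : X \notin geodesic X Y.
Proof. by have /andP[] := geodesic_uniq X Y. Qed.

Lemma mem_last_geodesic X Y : X != Y -> Y \in geodesic X Y.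
Proof.
by move=> XY; have := mem_last X (geodesic X Y); rewrite geodesic_last inE eq_sym (negbTE XY).
Qed.

Lemma geodesic_hdist1_uniq X Y : {in geodesic X Y &, forall W W',
  hdist X W = 1 -> hdist X W' = 1 -> W = W'}.
Proof.
rewrite /geodesic; move XY: (hdist X Y) => [//|k].
have [i XYi [XiY ->]] := geodesic_recS XY.
have [_ _ _ Idist Ibetween] := geodesic_recP XiY.
have far Z : Z \in geodesic_rec k (upd X i (Y i)) Y -> hdist X Z != 1.
  move=> Zin; rewrite (@hdist_split _ (upd X i (Y i))) ?hdist_upd //; last first.
    move=> j; rewrite ffunE; case: (j =P i) => [->|]; last by left.
    by right; case: (Ibetween _ Zin i) => ->; rewrite ?ffunE ?eqxx.
  rewrite add1n eqSS hdist_eq0; apply/eqP => X_eq.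
  by move: (Idist _ Zin); rewrite -X_eq XiY ltnn.
move=> W W'; rewrite !inE => /predU1P[->|/far/negP W_far] /predU1P[->|/far/negP W'_far] //.
- by move=> _ /eqP.
- by move=> /eqP.
- by move=> /eqP.
Qed.

Definition nbr X (j : nat) : word n :=
  [ffun i : 'I_n => if i == j./2 :> nat then shift3 (X i) (odd j) else X i].

Lemma nbr_upd X j (jn : j./2 < n) :
  nbr X j = upd X (Ordinal jn) (shift3 (X (Ordinal jn)) (odd j)).
Proof.
apply/ffunP => i; rewrite !ffunE; case: (i =P Ordinal jn) => [->|ne]; first by rewrite eqxx.
by case: eqP => // i_j; case: ne; apply: val_inj.
Qed.

Lemma half_lt j : j < 2 * n -> j./2 < n.
Proof. by rewrite ltn_half_double -mul2n. Qed.

Lemma hdist_nbr X j : j < 2 * n -> hdist X (nbr X j) = 1.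
Proof. by move/half_lt=> jn; rewrite (nbr_upd _ jn) hdist_upd // eq_sym shift3_neq. Qed.

Lemma nbr_neq X j : j < 2 * n -> (nbr X j == X) = false.
Proof. by move=> jn; apply/negbTE; rewrite eq_sym hdist1_neq ?hdist_nbr. Qed.

Lemma nbr_inj X : {in gtn (2 * n) &, injective (nbr X)}.
Proof.
move=> j j' /half_lt jn /half_lt _ /(congr1 (fun W : word n => W (Ordinal jn))).
rewrite !ffunE /= eqxx; case: eqP => [half_eq /shift3_inj odd_eq|_ /eqP].
  by rewrite -[j]odd_double_half -[j']odd_double_half odd_eq half_eq.
by rewrite (negbTE (shift3_neq _ _)).
Qed.

End Words.

Lemma index_map_iota (T : eqType) (f : nat -> T) m j :
  {in gtn m &, injective f} -> j < m -> index (f j) [seq f i | i <- iota 0 m] = j.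
Proof.
move=> f_inj jm.
have := nth_iota 0 0 jm; rewrite add0n => {1}<-.
rewrite -(nth_map 0 (f 0)) ?size_iota // index_uniq ?size_map ?size_iota //.
by rewrite map_inj_in_uniq ?iota_uniq // => a b; rewrite !mem_iota; apply: f_inj.
Qed.

Definition l0 : 'I_3 := @Ordinal 3 0 isT.
Definition l1 : 'I_3 := @Ordinal 3 1 isT.
Definition l2 : 'I_3 := @Ordinal 3 2 isT.

Definition layer_neqE :=
  ((erefl : (l0 == l1) = false), (erefl : (l0 == l2) = false),
   (erefl : (l1 == l0) = false), (erefl : (l1 == l2) = false),
   (erefl : (l2 == l0) = false), (erefl : (l2 == l1) = false)).

Lemma layerP (d : 'I_3) : [\/ d = l0, d = l1 | d = l2].
Proof.
by case: d => [[|[|[|m]]] dlt] //; [constructor 1|constructor 2|constructor 3]; apply: val_inj.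
Qed.

Section Vertices.
Variables p s q : nat.
Local Notation vert := (e3c_vertex p s q).

Definition vtx (A : word p) (B : word s) (C : word q) (d : 'I_3) : vert := (A, B, C, d).

Lemma vtx_eq A B C d A' B' C' d' :
  (vtx A B C d == vtx A' B' C' d') = [&& A == A', B == B', C == C' & d == d'].
Proof. by rewrite /vtx !xpair_eqE !andbA. Qed.

Lemma e3c_adjC : symmetric (@e3c_adj p s q).
Proof.
move=> x y; rewrite /e3c_adj eq_sym (eq_sym (vA y)) (eq_sym (vB y)) (eq_sym (vC y)) (eq_sym (vd y)).
rewrite (hdistC (vC y)) (hdistC (vB y)) (hdistC (vA y)).
by case: (vd x == 0 :> nat); case: (vd y == 0 :> nat); case: (vd x == 1 :> nat);
  case: (vd y == 1 :> nat); case: (vd x == 2 :> nat); case: (vd y == 2 :> nat).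
Qed.

Lemma adj_layer A B C d d' : d != d' -> e3c_adj (vtx A B C d) (vtx A B C d').
Proof. by move=> dd'; rewrite /e3c_adj vtx_eq /= !eqxx dd'. Qed.

Lemma adj_C0 A B C C' : hdist C C' = 1 -> e3c_adj (vtx A B C l0) (vtx A B C' l0).
Proof. by move=> CC'; rewrite /e3c_adj vtx_eq /= !eqxx (negbTE (hdist1_neq CC')) CC'. Qed.

Lemma adj_B1 A B B' C : hdist B B' = 1 -> e3c_adj (vtx A B C l1) (vtx A B' C l1).
Proof. by move=> BB'; rewrite /e3c_adj vtx_eq /= !eqxx (negbTE (hdist1_neq BB')) BB' !orbT. Qed.

Lemma adj_A2 A A' B C : hdist A A' = 1 -> e3c_adj (vtx A B C l2) (vtx A' B C l2).
Proof. by move=> AA'; rewrite /e3c_adj vtx_eq /= !eqxx (negbTE (hdist1_neq AA')) AA' !orbT. Qed.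

Lemma path_geodesic_B1 A C X Y rest : path (@e3c_adj p s q) (vtx A Y C l1) rest ->
  path (@e3c_adj p s q) (vtx A X C l1) ([seq vtx A W C l1 | W <- geodesic X Y] ++ rest).
Proof.
move=> rest_path; rewrite cat_path (last_map (fun W => vtx A W C l1)) geodesic_last rest_path.
rewrite andbT -[vtx A X C l1]/((fun W => vtx A W C l1) X) path_map.
by apply: sub_path (geodesic_path X Y) => W W' /eqP; apply: adj_B1.
Qed.

Lemma mem_map_vtxB A B C d A' C' d' (bs : seq (word s)) :
  (vtx A B C d \in [seq vtx A' W C' d' | W <- bs]) = [&& A == A', B \in bs, C == C' & d == d'].
Proof.
apply/mapP/and4P => [[W Win /eqP]|[/eqP-> Bin /eqP-> /eqP->]]; last by exists B.
by rewrite vtx_eq => /and4P[/eqP-> /eqP-> /eqP-> /eqP->].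
Qed.

Lemma vtx_injB A C d : injective (fun W => vtx A W C d).
Proof. by move=> W W' /eqP; rewrite vtx_eq => /and4P[_ /eqP]. Qed.

Definition container m (u v : vert) b :=
  exists P : 'I_m -> seq vert,
    (forall i, is_uv_path u v (P i)) /\
    injective P /\
    (forall i j, i <> j -> forall x, x \in P i -> x \notin P j) /\
    (forall i, path_length (P i) <= b).

Lemma container_classify m u v b (P : 'I_m -> seq vert) (cls : vert -> nat) :
  (forall i, is_uv_path u v (P i)) -> (forall i, P i != [::]) ->
  (forall i, {in P i, forall x, cls x = i}) -> (forall i, path_length (P i) <= b) ->
  container m u v b.
Proof.
move=> Ppath Pnil Pcls Plen; exists P; do !split=> //.
  move=> i j Pij; have := Pnil i; case Pi: (P i) => [|x l] // _.
  have [xi xj] : x \in P i /\ x \in P j by rewrite -Pij Pi mem_head.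
  by apply: ord_inj; rewrite -(Pcls _ _ xi) -(Pcls _ _ xj).
move=> i j ij x xi; apply/negP => xj; apply: ij; apply: ord_inj.
by rewrite -(Pcls _ _ xi) -(Pcls _ _ xj).
Qed.

Lemma container_rev m u v b : container m u v b -> container m v u b.
Proof.
move=> [P [Ppath [Pinj [Pdisj Plen]]]]; exists (fun i => rev (P i)); do !split.
- move=> i; move: (Ppath i) => /andP[Pi_path Pi_uniq]; apply/andP; split.
    move: (rev_path (@e3c_adj p s q) u (rcons (P i) v)).
    rewrite last_rcons belast_rcons rev_cons => ->.
    by apply: sub_path Pi_path => x y; rewrite e3c_adjC.
  by rewrite -rev_uniq rev_cons rev_rcons revK.
- by move=> i j /(congr1 rev); rewrite !revK => /Pinj.
- by move=> i j ij x; rewrite !mem_rev; apply: Pdisj.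
- by move=> i; rewrite /path_length size_rev; apply: Plen.
Qed.

End Vertices.

Arguments vtx_injB {p s q A C d}.

Lemma container_map p s q p' s' q' (f : e3c_vertex p s q -> e3c_vertex p' s' q') m u v b :
  injective f -> {mono f : x y / e3c_adj x y} -> container m u v b ->
  container m (f u) (f v) b.
Proof.
move=> f_inj f_adj [P [Ppath [Pinj [Pdisj Plen]]]]; exists (fun i => map f (P i)); do !split.
- move=> i; move: (Ppath i) => /andP[Pi_path Pi_uniq]; apply/andP; split.
    by rewrite -map_rcons path_map; apply: sub_path Pi_path => x y /=; rewrite f_adj.
  by rewrite -map_rcons -map_cons (map_inj_uniq f_inj).
- by move=> i j /(inj_map f_inj) /Pinj.
- by move=> i j ij _ /mapP[x xi ->]; rewrite mem_map //; exact: Pdisj ij x xi.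
- by move=> i; rewrite /path_length size_map; apply: Plen.
Qed.

Definition e3c_swap p s q (x : e3c_vertex p s q) : e3c_vertex q s p :=
  (vC x, vB x, vA x, rev_ord (vd x)).

Lemma e3c_swapK p s q : cancel (@e3c_swap p s q) (@e3c_swap q s p).
Proof. by case=> [[[A B] C] d]; rewrite /e3c_swap /= rev_ordK. Qed.

Lemma e3c_swap_vtx p s q A B C d :
  e3c_swap (@vtx p s q A B C d) = vtx C B A (rev_ord d).
Proof. by []. Qed.

Lemma e3c_adj_swap p s q : {mono @e3c_swap p s q : x y / e3c_adj x y}.
Proof.
case=> [[[A B] C] d] [[[A' B'] C'] d']; rewrite /e3c_adj /e3c_swap /vA /vB /vC /vd /=.
rewrite !xpair_eqE (inj_eq rev_ord_inj).
case: (layerP d) => ->; case: (layerP d') => ->; rewrite /= ?andbF ?andbT ?orbF.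
all: by case: (A == A'); case: (B == B'); case: (C == C').
Qed.

Ltac e3c_edge := match goal with
  | |- is_true (e3c_adj (vtx ?A ?B ?C _) (vtx ?A ?B ?C _)) => by apply: adj_layer
  | |- is_true (e3c_adj (vtx ?A ?B _ l0) (vtx ?A ?B _ l0)) => by apply: adj_C0; rewrite // hdistC
  | |- is_true (e3c_adj (vtx ?A _ ?C l1) (vtx ?A _ ?C l1)) => by apply: adj_B1; rewrite // hdistC
  | |- is_true (e3c_adj (vtx _ ?B ?C l2) (vtx _ ?B ?C l2)) => by apply: adj_A2; rewrite // hdistC
  end.

Ltac e3c_edges := repeat (apply/andP; split; [e3c_edge|]).

Ltac e3c_uniq facts := do 3 rewrite ?(cat_uniq, mem_cat, in_cons, in_nil, mem_map_vtxB, vtx_eq,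
  eqxx, layer_neqE, (negbTE (geodesic_notin _ _)), (map_inj_uniq vtx_injB), facts) /=;
  rewrite ?uniq_geodesic ?andbT ?andbF ?orbF ?orbT.

Section LayersZeroOne.
Variables p s q k : nat.
Hypotheses (p_gt0 : 0 < p) (k_le_s : k <= s) (k_le_q : k <= q).
Variables (A : word p) (B B' : word s) (C : word q).
Hypothesis BB' : B != B'.
Local Notation vert := (e3c_vertex p s q).
Local Notation u := (vtx A B C l0).
Local Notation v := (vtx A B' C l1).

Let j_lt_s j : j < 2 * k -> j < 2 * s.
Proof. by move=> jk; apply: leq_trans jk _; rewrite leq_mul2l k_le_s orbT. Qed.

Let j_lt_q j : j < 2 * k -> j < 2 * q.
Proof. by move=> jk; apply: leq_trans jk _; rewrite leq_mul2l k_le_q orbT. Qed.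

(* A neighbour of [B'] off the geodesic from [B'] to [B]; only one [j] can
   fail, and then [B'] itself is used. *)
Definition detour j := if nbr B' j \in geodesic B' B then B' else nbr B' j.

Lemma detour_neq j : (detour j == B) = false.
Proof.
rewrite /detour; case: ifP => [_|off]; first by rewrite eq_sym (negbTE BB').
by apply/negbTE; apply: contraFneq off => ->; rewrite mem_last_geodesic // eq_sym.
Qed.

Lemma detourP j : j < 2 * k ->
  detour j = B' \/ detour j \notin geodesic B' B /\ hdist (detour j) B' = 1.
Proof.
rewrite /detour; case: ifP => [|off] jk; [by left | right].
by rewrite off hdistC hdist_nbr ?j_lt_s.
Qed.

Lemma detour_inj : {in gtn (2 * k) &, injective detour}.
Proof.
move=> j j' /j_lt_s js /j_lt_s js'; rewrite /detour.
have nj := nbr_neq B' js; have nj' := nbr_neq B' js'.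
case: ifP => on; case: ifP => on' E; last exact: (nbr_inj js js' E).
- by apply: (nbr_inj js js'); apply: (geodesic_hdist1_uniq on on'); apply: hdist_nbr.
- by rewrite -E eqxx in nj'.
- by rewrite E eqxx in nj.
Qed.

Definition path01_direct : seq vert := [seq vtx A W C l1 | W <- rev (geodesic B' B)].

Definition path01_via_A : seq vert :=
  [:: vtx A B C l2; vtx (nbr A 0) B C l2; vtx (nbr A 0) B C l1] ++
  [seq vtx (nbr A 0) W C l1 | W <- geodesic B B'] ++
  [:: vtx (nbr A 0) B' C l2; vtx A B' C l2].

Definition path01_via_C j : seq vert :=
  [:: vtx A B (nbr C j) l0; vtx A B (nbr C j) l1] ++
  [seq vtx A W (nbr C j) l1 | W <- geodesic B (detour j)] ++
  [:: vtx A (detour j) (nbr C j) l0; vtx A (detour j) C l0] ++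
  (if detour j == B' then [::] else [:: vtx A (detour j) C l1]).

Lemma path01_direct_uv : is_uv_path u v path01_direct.
Proof.
rewrite /is_uv_path /path01_direct -map_rcons -rev_cons; apply/andP; split; last first.
  rewrite cons_uniq mem_map_vtxB layer_neqE !andbF (map_inj_uniq vtx_injB) rev_uniq.
  exact: geodesic_uniq.
rewrite (lastI B' (geodesic B' B)) rev_rcons geodesic_last /= adj_layer //=.
rewrite -[vtx A B C l1]/((fun W => vtx A W C l1) B) path_map -{1}(geodesic_last B' B) rev_path.
by apply: sub_path (geodesic_path B' B) => W W' /eqP /adj_B1 /=; rewrite e3c_adjC.
Qed.

Lemma path01_via_A_uv : is_uv_path u v path01_via_A.
Proof.
have p2 : 0 < 2 * p by rewrite muln_gt0.
have [aA A_a] := (nbr_neq A p2, hdist_nbr A p2).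
have Aa : (A == nbr A 0) = false by rewrite eq_sym.
have B_B' := negbTE BB'; have B'_B : (B' == B) = false by rewrite eq_sym.
rewrite /is_uv_path /path01_via_A rcons_cat /=; apply/andP; split.
  by e3c_edges; rewrite rcons_cat; apply: path_geodesic_B1 => /=; e3c_edges.
by rewrite !rcons_cat /=; e3c_uniq (aA, Aa, B_B', B'_B).
Qed.

Lemma path01_via_C_uv j : j < 2 * k -> is_uv_path u v (path01_via_C j).
Proof.
move=> jk; have jq := j_lt_q jk.
have [cC C_c] := (nbr_neq C jq, hdist_nbr C jq).
have Cc : (C == nbr C j) = false by rewrite eq_sym.
have B_B' := negbTE BB'; have B'_B : (B' == B) = false by rewrite eq_sym.
have bB := detour_neq j; have Bb : (B == detour j) = false by rewrite eq_sym.
rewrite /is_uv_path /path01_via_C.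
case: (detourP jk) => [b_B'|[_ b_B']].
  rewrite b_B' eqxx !rcons_cat /=; rewrite b_B' in bB Bb; apply/andP; split.
    by e3c_edges; apply: path_geodesic_B1 => /=; e3c_edges.
  by e3c_uniq (cC, Cc, bB, Bb, B_B', B'_B).
have bB' := negbTE (hdist1_neq b_B'); have B'b : (B' == detour j) = false by rewrite eq_sym.
rewrite bB' !rcons_cat /=; apply/andP; split.
  by e3c_edges; apply: path_geodesic_B1 => /=; e3c_edges.
by e3c_uniq (cC, Cc, bB, Bb, B_B', B'_B, bB', B'b).
Qed.

Definition paths01 (i : 'I_(2 * k + 2)) : seq vert :=
  match val i with 0 => path01_direct | 1 => path01_via_A | j.+2 => path01_via_C j end.

Definition label01 (x : vert) : nat :=
  if (vd x == l2) || (vA x != A) then 1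
  else if vC x != C then (index (vC x) [seq nbr C j | j <- iota 0 (2 * k)]).+2
  else if (vd x == l1) && (vB x \in geodesic B' B) then 0
  else (index (vB x) [seq detour j | j <- iota 0 (2 * k)]).+2.

Lemma label01_paths i : {in paths01 i, forall x, label01 x = i}.
Proof.
case: i => [[|[|j]] /= ilt] x; rewrite /paths01 /=.
- case/mapP=> W W_in ->; rewrite mem_rev in W_in.
  by rewrite /label01 /vA /vB /vC /vd /= !eqxx W_in.
- have aA : nbr A 0 != A by rewrite nbr_neq ?muln_gt0.
  rewrite /label01 !mem_cat !inE => /or3P[/or3P[]/eqP->|/mapP[W _ ->]|/orP[]/eqP->];
    by rewrite /vA /vB /vC /vd /= ?aA ?orbT.
have jk : j < 2 * k by move: ilt; rewrite addn2 !ltnS.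
have C_idx : index (nbr C j) [seq nbr C j | j <- iota 0 (2 * k)] = j.
  apply: index_map_iota jk => a b /j_lt_q aq /j_lt_q bq; exact: nbr_inj.
have B_idx : index (detour j) [seq detour j | j <- iota 0 (2 * k)] = j.
  exact: index_map_iota detour_inj jk.
have cC := nbr_neq C (j_lt_q jk).
rewrite /label01 !mem_cat !inE => /or4P[/orP[]/eqP->|/mapP[W _ ->]|/orP[]/eqP->|]; last first.
  case: ifP => // bB'; rewrite inE => /eqP->; rewrite /vA /vB /vC /vd /= !eqxx /=.
  by case: (detourP jk) => [/eqP|[/negbTE-> _]]; rewrite ?bB' ?B_idx.
all: by rewrite /vA /vB /vC /vd /= ?eqxx /= ?cC /= ?C_idx ?B_idx.
Qed.

Lemma container01 : container (2 * k + 2) u v (s + 6).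
Proof.
have jk (j : nat) : j.+2 < 2 * k + 2 -> j < 2 * k by rewrite addn2 !ltnS.
apply: (container_classify (P := paths01) (cls := label01)).
- case=> [[|[|j]] /= ilt]; rewrite /paths01 /=.
  + exact: path01_direct_uv.
  + exact: path01_via_A_uv.
  + exact/path01_via_C_uv/jk.
- case=> [[|[|j]] //= ilt]; rewrite /paths01 /= /path01_direct.
  by rewrite -size_eq0 size_map size_rev size_geodesic hdist_eq0 eq_sym.
- exact: label01_paths.
case=> [[|[|j]] /= ilt];
  rewrite /paths01 /path_length /= ?size_cat size_map ?size_rev size_geodesic /=.
- by have := hdist_leq B' B; lia.
- by have := hdist_leq B B'; lia.
- by have := hdist_leq B (detour j); case: ifP => _ /=; lia.
Qed.

End LayersZeroOne.

Section LayersZeroTwo.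
Variables p s q k : nat.
Hypotheses (k_gt0 : 0 < k) (k_le_p : k <= p) (k_le_q : k <= q).
Variables (A : word p) (B B' : word s) (C : word q).
Hypothesis BB' : B != B'.
Local Notation vert := (e3c_vertex p s q).
Local Notation u := (vtx A B C l0).
Local Notation v := (vtx A B' C l2).

Let j_lt_p j : j < 2 * k -> j < 2 * p.
Proof. by move=> jk; apply: leq_trans jk _; rewrite leq_mul2l k_le_p orbT. Qed.

Let j_lt_q j : j < 2 * k -> j < 2 * q.
Proof. by move=> jk; apply: leq_trans jk _; rewrite leq_mul2l k_le_q orbT. Qed.

Let k2_gt0 : 0 < 2 * k.
Proof. by rewrite muln_gt0. Qed.

Definition path02_direct : seq vert :=
  vtx A B C l1 :: [seq vtx A W C l1 | W <- geodesic B B'].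

Definition path02_via_C : seq vert :=
  [:: vtx A B (nbr C 0) l0; vtx A B (nbr C 0) l1] ++
  [seq vtx A W (nbr C 0) l1 | W <- geodesic B B'] ++
  [:: vtx A B' (nbr C 0) l0; vtx A B' C l0].

(* Only one path can leave [u] through [vtx A B C l2]; the others reach
   layer 2 from a neighbour of [C] not used by [path02_via_C]. *)
Definition path02_via_A j : seq vert :=
  (if j is 0 then [:: vtx A B C l2; vtx (nbr A 0) B C l2]
   else [:: vtx A B (nbr C j) l0; vtx A B (nbr C j) l2; vtx (nbr A j) B (nbr C j) l2;
            vtx (nbr A j) B (nbr C j) l0; vtx (nbr A j) B C l0]) ++
  vtx (nbr A j) B C l1 :: [seq vtx (nbr A j) W C l1 | W <- geodesic B B'] ++
  [:: vtx (nbr A j) B' C l2].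

Lemma path02_direct_uv : is_uv_path u v path02_direct.
Proof.
have B_B' := negbTE BB'; have B'_B : (B' == B) = false by rewrite eq_sym.
rewrite /is_uv_path /path02_direct /=; apply/andP; split.
  by e3c_edges; rewrite -cats1; apply: path_geodesic_B1 => /=; e3c_edges.
by rewrite -cats1; e3c_uniq (B_B', B'_B).
Qed.

Lemma path02_via_C_uv : is_uv_path u v path02_via_C.
Proof.
have [cC C_c] := (nbr_neq C (j_lt_q k2_gt0), hdist_nbr C (j_lt_q k2_gt0)).
have Cc : (C == nbr C 0) = false by rewrite eq_sym.
have B_B' := negbTE BB'; have B'_B : (B' == B) = false by rewrite eq_sym.
rewrite /is_uv_path /path02_via_C !rcons_cat /=; apply/andP; split.
  by e3c_edges; apply: path_geodesic_B1 => /=; e3c_edges.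
by e3c_uniq (cC, Cc, B_B', B'_B, mem_last_geodesic BB').
Qed.

Lemma path02_via_A_uv j : j < 2 * k -> is_uv_path u v (path02_via_A j).
Proof.
move=> jk; have [jp jq] := (j_lt_p jk, j_lt_q jk).
have [aA A_a] := (nbr_neq A jp, hdist_nbr A jp).
have Aa : (A == nbr A j) = false by rewrite eq_sym.
have [cC C_c] := (nbr_neq C jq, hdist_nbr C jq).
have Cc : (C == nbr C j) = false by rewrite eq_sym.
have B_B' := negbTE BB'; have B'_B : (B' == B) = false by rewrite eq_sym.
rewrite /is_uv_path /path02_via_A.
case: j jk {jp jq} aA A_a Aa cC C_c Cc => [|j] jk aA A_a Aa cC C_c Cc.
  rewrite /= !rcons_cat /=; apply/andP; split.
    by e3c_edges; apply: path_geodesic_B1 => /=; e3c_edges.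
  by e3c_uniq (aA, Aa, B_B', B'_B, mem_last_geodesic BB').
rewrite /= !rcons_cat /=; apply/andP; split.
  by e3c_edges; apply: path_geodesic_B1 => /=; e3c_edges.
by e3c_uniq (aA, Aa, cC, Cc, B_B', B'_B, mem_last_geodesic BB').
Qed.

Definition paths02 (i : 'I_(2 * k + 2)) : seq vert :=
  match val i with 0 => path02_direct | 1 => path02_via_C | j.+2 => path02_via_A j end.

Definition label02 (x : vert) : nat :=
  if vA x != A then (index (vA x) [seq nbr A j | j <- iota 0 (2 * k)]).+2
  else if vC x != C then
    (if index (vC x) [seq nbr C j | j <- iota 0 (2 * k)] is j.+1 then j.+3 else 1)
  else if vd x == l1 then 0 else if vd x == l0 then 1 else 2.

Lemma label02_paths i : {in paths02 i, forall x, label02 x = i}.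
Proof.
have A_idx j : j < 2 * k -> index (nbr A j) [seq nbr A j | j <- iota 0 (2 * k)] = j.
  move=> jk; apply: index_map_iota jk => a b /j_lt_p ap /j_lt_p bp; exact: nbr_inj.
have C_idx j : j < 2 * k -> index (nbr C j) [seq nbr C j | j <- iota 0 (2 * k)] = j.
  move=> jk; apply: index_map_iota jk => a b /j_lt_q aq /j_lt_q bq; exact: nbr_inj.
case: i => [[|[|j]] /= ilt] x; rewrite /paths02 /label02 /=.
- by rewrite inE => /predU1P[->|/mapP[W _ ->]]; rewrite /vA /vC /vd /= !eqxx.
- have cC := nbr_neq C (j_lt_q k2_gt0).
  rewrite !mem_cat !inE => /or3P[/orP[]/eqP->|/mapP[W _ ->]|/orP[]/eqP->];
    by rewrite /vA /vC /vd /= ?eqxx /= ?cC /= ?C_idx.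
have jk : j < 2 * k by move: ilt; rewrite addn2 !ltnS.
have aA := nbr_neq A (j_lt_p jk).
rewrite mem_cat inE => /orP[|/predU1P[->|]]; last first.
- rewrite mem_cat inE => /orP[/mapP[W _ ->]|/eqP->]; by rewrite /vA /= aA /= A_idx.
- by rewrite /vA /= aA /= A_idx.
case: j jk {ilt} aA => [|j] jk aA; rewrite !inE.
  by case/orP=> /eqP->; rewrite /vA /vC /vd /= ?eqxx ?aA /= ?A_idx.
have cC := nbr_neq C (j_lt_q jk).
by case/or4P=> [||| /orP[]] /eqP->; rewrite /vA /vC /vd /= ?eqxx ?aA ?cC /= ?A_idx ?C_idx.
Qed.

Lemma container02 : container (2 * k + 2) u v (s + 8).
Proof.
apply: (container_classify (P := paths02) (cls := label02)).
- case=> [[|[|j]] /= ilt]; rewrite /paths02 /=.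
  + exact: path02_direct_uv.
  + exact: path02_via_C_uv.
  + by apply: path02_via_A_uv; move: ilt; rewrite addn2 !ltnS.
- by case=> [[|[|[|j]]] /= ilt]; rewrite /paths02.
- exact: label02_paths.
case=> [[|[|[|j]]] /= ilt]; rewrite /paths02 /path_length /= ?size_cat /= size_map size_geodesic.
all: by have := hdist_leq B B'; lia.
Qed.

End LayersZeroTwo.

Theorem lemma16 (r s t : nat) (hr : 1 <= r) (hrs : r <= s) (hst : s <= t)
    (u v : e3c_vertex r s t) :
  vA u = vA v -> vB u <> vB v -> vC u = vC v -> vd u <> vd v ->
  exists P : 'I_(2 * r + 2) -> seq (e3c_vertex r s t),
    (forall i, is_uv_path u v (P i)) /\
    injective P /\
    (forall i j, i <> j -> forall x, x \in P i -> x \notin P j) /\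
    (forall i,
       let b := if ((vd u == 0 :> nat) && (vd v == 2 :> nat))
                   || ((vd u == 2 :> nat) && (vd v == 0 :> nat))
                then s + 8 else s + 6 in
       path_length (P i) <= b).
Proof.
case: u v => [[[A B] C] d] [[[A' B'] C'] d']; rewrite /vA /vB /vC /vd /= => <- /eqP BB' <- dd'.
have B'B : B' != B by rewrite eq_sym.
have [t_gt0 r_le_t] : 0 < t /\ r <= t by lia.
have swap_layers : rev_ord l0 = l2 /\ rev_ord l1 = l1 by split; apply: val_inj.
have container21 (X Y : word s) :
    X != Y -> container (2 * r + 2) (vtx A X C l2) (vtx A Y C l1) (s + 6).
  move=> XY; case: swap_layers => <- <-; rewrite -!e3c_swap_vtx.
  apply: (container_map (can_inj (@e3c_swapK t s r)) (@e3c_adj_swap t s r)).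
  exact: container01.
case: (layerP d) dd' => ->; case: (layerP d') => -> // _.
- exact: container01.
- exact: (container02 hr (leqnn r) r_le_t).
- exact/container_rev/container01.
- exact/container_rev/container21.
- exact/container_rev/(container02 hr (leqnn r) r_le_t).
- exact: container21.
Qed.
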